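(* For every positive integer $n$, the rank-width of the $n\times n$ comparability grid is at least $n/4$.
   Context: The $n\times n$ comparability grid is the simple graph with vertex set $\{1,\dots,n\}^2$ in which distinct $(i,j),(i',j')$ are adjacent iff ($i\le i'$ and $j\le j'$) or ($i\ge i'$ and $j\ge j'$). For $X\subseteq V(G)$, the cut-rank $r(X)$ is the $\mathrm{GF}(2)$-rank of the submatrix of the adjacency matrix with rows $X$ and columns $V(G)\setminus X$. A rank-decomposition of $G$ is a tree $T$ all of whose vertices have degree $1$ or $3$, together with a bijection between the leaves of $T$ and $V(G)$; each edge $e$ of $T$ splits the leaves, hence $V(G)$, into two parts $(X_e,Y_e)$, and the width of $e$ is $r(X_e)$. The width of the decomposition is the maximum width of its edges, and the rank-width $rw(G)$ is the minimum width over all rank-decompositions of $G$. *)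

From HB Require Import structures.
From mathcomp Require Import all_boot all_order all_algebra.
Set Implicit Arguments. Unset Strict Implicit. Unset Printing Implicit Defensive.
Import GRing.Theory.
Local Open Scope ring_scope.
Local Open Scope nat_scope.

Definition simple_graph (V : finType) (adj : rel V) : Prop :=
  (forall x y, adj x y = adj y x) /\ (forall x, ~~ adj x x).

Definition cut_rank (V : finType) (adj : rel V) (X : {set V}) : nat :=
  \rank (\matrix_(i < #|X|, j < #|~: X|)
           ((adj (enum_val i) (enum_val j))%:R : 'F_2))%R.

Definition connected_graph (T : finType) (e : rel T) : Prop :=
  forall x y, connect e x y.

Definition has_cycle (T : finType) (e : rel T) : Prop :=
  exists (x : T) (p : seq T),
    [/\ uniq (x :: p), 2 <= size p, path e x p & e (last x p) x].

Definition is_tree (T : finType) (e : rel T) : Prop :=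
  [/\ simple_graph e, connected_graph e & ~ has_cycle e].

Definition degree (T : finType) (e : rel T) (t : T) : nat := #|[set u | e t u]|.

Definition is_leaf (T : finType) (e : rel T) (t : T) : bool := degree e t == 1.

Definition del_edge (T : finType) (e : rel T) (u v : T) : rel T :=
  fun x y => e x y && ~~ ((x == u) && (y == v)) && ~~ ((x == v) && (y == u)).

Definition rank_decomposition (V T : finType) (e : rel T) (f : V -> T) : Prop :=
  [/\ is_tree e,
      (forall t, degree e t = 1 \/ degree e t = 3),
      injective f
    & (forall t, is_leaf e t <-> exists v, f v = t)].

Definition edge_part (V T : finType) (e : rel T) (f : V -> T) (u v : T) : {set V} :=
  [set x | connect (del_edge e u v) u (f x)].

Definition decomposition_width (V T : finType) (adj : rel V) (e : rel T)
    (f : V -> T) : nat :=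
  \max_(p : T * T | e p.1 p.2) cut_rank adj (edge_part e f p.1 p.2).

(* vertex set {1..n}^2, represented by 'I_n * 'I_n (shift by one) *)
Definition grid_vertex (n : nat) : finType := ('I_n * 'I_n)%type.

Definition comp_grid (n : nat) : rel (grid_vertex n) :=
  fun a b => (a != b) &&
    ((((a.1 <= b.1) && (a.2 <= b.2))%N) || (((b.1 <= a.1) && (b.2 <= a.2))%N)).
Arguments comp_grid n : clear implicits.

From mathcomp Require Import all_boot all_order all_algebra.
From mathcomp Require Import zify.
Set Implicit Arguments. Unset Strict Implicit. Unset Printing Implicit Defensive.
Import GRing.Theory.

(* A tree whose internal nodes have degree 3, carrying the vertices of G on its leaves,
   has an edge each of whose sides carries at least a quarter of the vertices.  For the
   n x n comparability grid, if both a set X of cells and its complement have at least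
   n^2/4 cells, then at least n/2 rows, or at least n/2 columns, meet both X and its
   complement: otherwise a row and a column avoiding one of the two sides force that side
   into the product of the mixed rows and the mixed columns, which has fewer than n^2/4
   cells.  Finally the cut-rank of X is at least half the number of mixed rows: the cell
   (r, 0) is comparable with the cell (r', c), c > 0, exactly when r <= r', so the mixed
   rows whose first cell lies in X (resp. outside X) index a unitriangular submatrix of
   the cut matrix of X (resp. of its complement, which has the same rank). *)

Section TreeSides.
Variables (T : finType) (e : rel T).
Hypotheses (e_sym : forall x y, e x y = e y x) (e_irr : forall x, ~~ e x x).
Hypothesis e_acyclic : ~ has_cycle e.

Definition side (u v : T) : {set T} := [set t | connect (del_edge e u v) u t].

Lemma del_edge_sub u v : subrel (del_edge e u v) e.
Proof. by move=> x y /andP[/andP[]]. Qed.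

Lemma edge_neq x y : e x y -> x != y.
Proof. by apply: contraTneq => ->; apply: e_irr. Qed.

Lemma path_del_edge u v x p :
  (u \notin x :: p) || (v \notin x :: p) -> path e x p -> path (del_edge e u v) x p.
Proof.
case/orP=> [u_p|v_p].
- apply: (sub_in_path (P := predC1 u)); last by apply/allP => y /=; apply: contraTneq => ->.
  by move=> y z /= yu zu yz; rewrite /del_edge yz (negbTE yu) (negbTE zu) !andbF.
- apply: (sub_in_path (P := predC1 v)); last by apply/allP => y /=; apply: contraTneq => ->.
  by move=> y z /= yv zv yz; rewrite /del_edge yz (negbTE yv) (negbTE zv) !andbF.
Qed.

Lemma notin_side v w : e v w -> v \notin side w v.
Proof.
move=> vw; rewrite inE; apply/negP => /connectP[p p_path p_last].
case/shortenP: p_path p_last => {}p p_path p_uniq _ p_last.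
case/lastP: p p_path p_uniq p_last => [|q v'] p_path p_uniq.
  by move=> /= vw_eq; move: (edge_neq vw); rewrite vw_eq eqxx.
rewrite last_rcons => v_eq; subst v'.
case: q p_path p_uniq => [|y q]; first by rewrite /= /del_edge !eqxx !andbF.
rewrite rcons_path => /andP[yq_path last_del] yq_uniq.
apply: e_acyclic; exists v, (w :: y :: q); split => //.
- by rewrite -(rot_uniq 1) rot1_cons.
- rewrite -[path _ v _]/(e v w && path e w (y :: q)) vw.
  by rewrite (sub_path (@del_edge_sub w v) yq_path).
- exact: del_edge_sub last_del.
Qed.

Lemma side_proper u v w : e u v -> e v w -> w != u -> side w v \proper side v u.
Proof.
move=> uv vw wu; apply/properP; split; last first.
  by exists v; [rewrite inE connect0 | apply: notin_side].
apply/subsetP => t; rewrite !inE => /connectP[p p_path ->] {t}.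
case/shortenP: p_path => {}p p_path _ _.
have v_p : v \notin w :: p.
  by apply: contraNN (notin_side vw) => v_p; rewrite inE (path_connect p_path v_p).
apply/connectP; exists (w :: p) => //.
have vw_del : del_edge e v u v w.
  by rewrite /del_edge vw eqxx (negbTE wu) [v == u]eq_sym (negbTE (edge_neq uv)).
rewrite -[path _ v _]/(del_edge e v u v w && path (del_edge e v u) w p) vw_del.
by rewrite path_del_edge ?v_p ?orbT // (sub_path (@del_edge_sub w v)).
Qed.

Lemma side_ind (P : T -> T -> Prop) :
  (forall u v, e u v -> (forall w, e v w -> w != u -> P v w) -> P u v) ->
  forall u v, e u v -> P u v.
Proof.
move=> IH u v; move: {2}#|side v u| (leqnn #|side v u|) => k.
elim: k u v => [|k IHk] u v size_uv uv.
  move: size_uv; rewrite leqn0 cards_eq0 => /eqP side0.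
  by move: (in_set0 v); rewrite -side0 inE connect0.
apply: IH => // w vw wu; apply: IHk => //.
by rewrite -ltnS (leq_trans _ size_uv) // proper_card // side_proper.
Qed.

Lemma side_leaf u v : degree e v = 1 -> e u v -> side v u \subset [set v].
Proof.
move=> /eqP/cards1P[z Nv] uv.
have -> : u = z by apply/set1P; rewrite -Nv inE e_sym.
apply/subsetP => t; rewrite !inE => /connectP[[|y p] p_path ->] //.
case/andP: p_path => /andP[/andP[vy]]; rewrite eqxx /= => /negP yz _ _; exfalso; apply: yz.
by rewrite -in_set1 -Nv inE.
Qed.

Lemma side_split u v : degree e v = 3 -> e u v ->
  exists w1 w2, [/\ e v w1, e v w2, w1 != u, w2 != u &
     side v u \subset v |: (side w1 v :|: side w2 v)].
Proof.
move=> deg_v uv; have vu : e v u by rewrite e_sym.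
have : #|[set y | e v y] :\ u| == 2.
  by move: deg_v; rewrite /degree (cardsD1 u) inE vu add1n => -[->].
case/cards2P=> w1 [w2 [_ Nv]].
have : w1 \in [set y | e v y] :\ u by rewrite Nv !inE eqxx.
have : w2 \in [set y | e v y] :\ u by rewrite Nv !inE eqxx orbT.
rewrite !inE => /andP[w2u vw2] /andP[w1u vw1].
exists w1, w2; split => //.
apply/subsetP => t; rewrite inE => /connectP[p p_path ->] {t}.
case/shortenP: p_path => -[|y q] /=; first by rewrite !inE eqxx.
case/andP=> /andP[/andP[vy]]; rewrite eqxx /= => yu _ q_path /andP[v_q _] _.
have : y \in [set y | e v y] :\ u by rewrite !inE yu vy.
have t_side : connect (del_edge e y v) y (last y q).
  apply/connectP; exists q => //.
  by rewrite path_del_edge ?v_q ?orbT // (sub_path (@del_edge_sub v u)).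
by rewrite Nv !inE => /orP[] /eqP <-; rewrite t_side ?orbT.
Qed.

Hypothesis e_connected : connected_graph e.

Lemma side_cover u v t : e u v -> (t \in side u v) || (t \in side v u).
Proof.
move=> uv; have /connectP[p p_path ->] := e_connected u t.
case/shortenP: p_path => -[|y q] /=; first by rewrite inE connect0.
case/andP=> uy q_path /andP[u_q _] _.
case: (eqVneq y v) => [yv|yv]; rewrite !inE; apply/orP.
  by right; apply/connectP; exists q; rewrite -?yv // path_del_edge ?u_q ?orbT.
left; apply/connectP; exists (y :: q) => //.
have uy_del : del_edge e u v u y.
  by rewrite /del_edge uy eqxx (negbTE yv) [u == v](negbTE (edge_neq uv)) andbF.
rewrite -[path _ u _]/(del_edge e u v u y && path (del_edge e u v) y q) uy_del.
by rewrite path_del_edge ?u_q.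
Qed.
End TreeSides.

Section Decomposition.
Variables (V T : finType) (e : rel T) (f : V -> T).
Hypothesis decomp : rank_decomposition e f.

Let e_tree : is_tree e. Proof. by case: decomp. Qed.
Let e_sym : forall x y, e x y = e y x. Proof. by case: e_tree => -[]. Qed.
Let e_irr : forall x, ~~ e x x. Proof. by case: e_tree => -[]. Qed.
Let e_connected : connected_graph e. Proof. by case: e_tree. Qed.
Let e_acyclic : ~ has_cycle e. Proof. by case: e_tree. Qed.
Let degree13 : forall t, degree e t = 1 \/ degree e t = 3. Proof. by case: decomp. Qed.
Let f_inj : injective f. Proof. by case: decomp. Qed.
Let leafP : forall t, is_leaf e t <-> exists x, f x = t. Proof. by case: decomp. Qed.

Let degree_f x : degree e (f x) = 1.
Proof. by apply/eqP/leafP; exists x. Qed.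

Local Notation part u v := (edge_part e f u v).

Lemma edge_partE u v x : (x \in part u v) = (f x \in side e u v).
Proof. by rewrite !inE. Qed.

Lemma leaf_neighbor t : degree e t = 1 -> exists u, e t u.
Proof. by case/eqP/cards1P => u Nt; exists u; move: (set11 u); rewrite -Nt inE. Qed.

Lemma side_has_leaf u v : e u v -> exists x, f x \in side e v u.
Proof.
move: u v; apply: (side_ind e_irr e_acyclic) => u v uv IH.
case: (degree13 v) => [deg_v|deg_v].
  by case/leafP: (introT eqP deg_v) => x <-; exists x; rewrite inE connect0.
have [w [_ [vw _ wu _ _]]] := side_split e_sym deg_v uv.
have [x x_side] := IH w vw wu.
by exists x; apply: subsetP x_side; apply: proper_sub (side_proper e_irr e_acyclic uv vw wu).
Qed.

Lemma card_gt1 (x0 : V) : 1 < #|V|.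
Proof.
have [u x0u] := leaf_neighbor (degree_f x0).
have [x x_side] := side_has_leaf x0u.
apply/card_gt1P; exists x, x0; split => //.
by apply: contraNneq (notin_side e_irr e_acyclic x0u) => x_eq; rewrite -{1}x_eq.
Qed.

Lemma card_edge_part_leaf u v : degree e v = 1 -> e u v -> #|part v u| <= 1.
Proof.
move=> deg_v uv; have /subsetP leaf_side := side_leaf e_sym deg_v uv.
apply/card_le1_eqP => x y; rewrite !edge_partE.
by move=> /leaf_side/set1P fx /leaf_side/set1P fy; apply: f_inj; rewrite fx fy.
Qed.

Lemma edge_part_branch u v : degree e v = 3 -> e u v ->
  exists w1 w2, [/\ e v w1, e v w2, w1 != u, w2 != u &
     part v u \subset part w1 v :|: part w2 v].
Proof.
move=> deg_v uv; have [w1 [w2 [vw1 vw2 w1u w2u side_v]]] := side_split e_sym deg_v uv.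
exists w1, w2; split => //; apply/subsetP => x; rewrite edge_partE => /(subsetP side_v).
rewrite in_setU1 => /orP[/eqP fx|]; first by move: (degree_f x); rewrite fx deg_v.
by rewrite !inE.
Qed.

Lemma edge_part_cover u v : e u v -> #|V| <= #|part u v| + #|part v u|.
Proof.
move=> uv; rewrite -cardsT (leq_trans _ (leq_card_setU _ _)) // subset_leq_card //.
by apply/subsetP => x _; rewrite in_setU !edge_partE (side_cover e_irr e_connected _ uv).
Qed.

(* [x0] excludes the empty decomposition, with V and T both empty. *)
Lemma balanced_edge (x0 : V) : exists u v,
  [/\ e u v, #|V| <= 4 * #|part u v| & #|V| <= 4 * #|~: part u v|].
Proof.
pose balanced p :=
  [&& e p.1 p.2, #|V| <= 4 * #|part p.1 p.2| & #|V| <= 4 * #|~: part p.1 p.2|].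
case: (boolP [exists p, balanced p]) => [/existsP[[u v] /and3P[]]|]; first by exists u, v.
rewrite negb_exists => /forallP unbalanced.
(* Otherwise induction along the edges shows that no side holds more than three quarters of V,
   hence every side holds less than a quarter; but the two sides of an edge cover V. *)
have small u v : e u v -> 4 * #|part u v| <= 3 * #|V| -> 4 * #|part u v| < #|V|.
  move=> uv; move: (unbalanced (u, v)); rewrite /balanced /= uv /= negb_and -!ltnNge.
  by case/orP => //; rewrite -(cardsC (part u v)); lia.
have not_large u v : e u v -> 4 * #|part v u| <= 3 * #|V|.
  move: u v; apply: (side_ind e_irr e_acyclic) => u v uv IH.
  case: (degree13 v) => deg_v.
    by have := card_edge_part_leaf deg_v uv; have := card_gt1 x0; lia.
  have [w1 [w2 [vw1 vw2 w1u w2u part_v]]] := edge_part_branch deg_v uv.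
  have w1v : e w1 v by rewrite e_sym.
  have w2v : e w2 v by rewrite e_sym.
  have := small w1 v w1v (IH w1 vw1 w1u); have := small w2 v w2v (IH w2 vw2 w2u).
  by have := leq_trans (subset_leq_card part_v) (leq_card_setU _ _); lia.
have [u x0u] := leaf_neighbor (degree_f x0).
have ux0 : e u (f x0) by rewrite e_sym.
have := small _ _ x0u (not_large _ _ ux0); have := small _ _ ux0 (not_large _ _ x0u).
by have := edge_part_cover x0u; lia.
Qed.
End Decomposition.

Lemma leq_enum_val n (S : {set 'I_n}) (i j : 'I_#|S|) :
  (enum_val i <= enum_val j) = (i <= j).
Proof.
have lt_enum_val (i' j' : 'I_#|S|) : i' < j' -> enum_val i' < enum_val j'.
  move=> lt_ij; have x0 := enum_val i'.
  have ltT : transitive (relpre (val : 'I_n -> nat) ltn).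
    by move=> a b c /=; apply: ltn_trans.
  have S_sorted : sorted (relpre (val : 'I_n -> nat) ltn) (enum S).
    rewrite /enum_mem; apply: sorted_filter => //.
    by have := iota_ltn_sorted 0 n; rewrite -val_enum_ord sorted_map enumT.
  have in_enum (k : 'I_#|S|) : (k : nat) \in [pred k | k < size (enum S)].
    by rewrite inE -cardE.
  have lt_nth := sorted_ltn_nth ltT x0 S_sorted.
  rewrite !(enum_val_nth x0); exact: lt_nth _ _ (in_enum i') (in_enum j') lt_ij.
case: (ltngtP i j) => [lt_ij|lt_ji|/val_inj ->]; last by rewrite !leqnn.
- by rewrite ltnW // lt_enum_val.
- by rewrite leqNgt lt_enum_val.
Qed.

Section Matrices.
Local Open Scope ring_scope.

Lemma mxrank_mxsub (F : fieldType) m n m' n'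
    (r : 'I_m' -> 'I_m) (c : 'I_n' -> 'I_n) (A : 'M[F]_(m, n)) :
  (\rank (mxsub r c A) <= \rank A)%N.
Proof.
rewrite mxsubrc (leq_trans (mxrankS (rowsub_sub _ _))) //.
by rewrite -mxrank_tr -[X in (_ <= X)%N]mxrank_tr trmx_mxsub mxrankS // rowsub_sub.
Qed.

Lemma mxrank_upper_ones (F : fieldType) k :
  \rank (\matrix_(i < k, j < k) ((i <= j)%N%:R : F)) = k.
Proof.
apply: mxrank_unit; rewrite unitmxE -det_tr det_trig.
  by rewrite big1 ?unitr1 // => i _; rewrite !mxE leqnn.
by apply/is_trig_mxP => i j lt_ij; rewrite !mxE leqNgt lt_ij.
Qed.

End Matrices.

Section CutRank.
Variables (V : finType) (adj : rel V).
Local Open Scope ring_scope.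

Lemma cut_rank_ge k l (x : 'I_k -> V) (y : 'I_l -> V) (X : {set V}) :
  (forall i, x i \in X) -> (forall j, y j \notin X) ->
  (\rank (\matrix_(i, j) ((adj (x i) (y j))%:R : 'F_2)) <= cut_rank adj X)%N.
Proof.
case: k x => [|k] x; first by rewrite flatmx0 mxrank0.
case: l y => [|l] y; first by rewrite thinmx0 mxrank0.
move=> xX yX; have yCX : y ord0 \in ~: X by rewrite inE yX.
pose r i := enum_rank_in (xX ord0) (x i).
pose c j := enum_rank_in yCX (y j).
apply: leq_trans (mxrank_mxsub r c _); apply/eq_leq; congr (\rank _); apply/matrixP => i j.
by rewrite !mxE /r /c !enum_rankK_in // inE yX.
Qed.

Hypothesis adj_sym : symmetric adj.

Lemma cut_rank_setC X : cut_rank adj (~: X) = cut_rank adj X.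
Proof.
suff le_setC (Y : {set V}) : (cut_rank adj (~: Y) <= cut_rank adj Y)%N.
  by apply/anti_leq; rewrite le_setC -{1}[X]setCK le_setC.
rewrite {1}/cut_rank -mxrank_tr.
have -> : (\matrix_(i, j) ((adj (enum_val i) (enum_val j))%:R : 'F_2))^T =
          \matrix_(i, j) ((adj (enum_val i) (enum_val j))%:R : 'F_2)
            :> 'M_(#|~: ~: Y|, #|~: Y|).
  by apply/matrixP => i j; rewrite !mxE adj_sym.
by apply: cut_rank_ge => i; have := enum_valP i; rewrite !inE ?negbK.
Qed.
End CutRank.

Definition mixed_lines (I J V : finType) (P : I -> J -> V) (X : {set V}) : {set I} :=
  [set i | [exists j, P i j \in X] && [exists j, P i j \notin X]].

Lemma mixed_lines_setC (I J V : finType) (P : I -> J -> V) X :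
  mixed_lines P (~: X) = mixed_lines P X.
Proof.
apply/setP => i; rewrite !inE andbC.
by congr (_ && _); apply: eq_existsb => j; rewrite inE ?negbK.
Qed.

Lemma notin_mixed_lines (I J V : finType) (P : I -> J -> V) X i j j' :
  i \notin mixed_lines P X -> P i j \in X -> P i j' \in X.
Proof.
rewrite inE negb_and => /orP[/existsPn pure|/existsPn pure] Pij.
  by move: (pure j); rewrite Pij.
exact: negbNE (pure j').
Qed.

Section Lines.
Variables (V : finType) (adj : rel V) (k l : nat) (P : 'I_k -> 'I_l.+1 -> V).
Hypothesis adj_sym : symmetric adj.
Hypothesis adj_line : forall r r' c, c != ord0 -> adj (P r ord0) (P r' c) = (r <= r').

Lemma anchored_lines_bound (X : {set V}) :
  #|[set r | (P r ord0 \in X) && [exists c, P r c \notin X]]| <= cut_rank adj X.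
Proof.
set S := [set r | _]; pose exit r := odflt ord0 [pick c | P r c \notin X].
have exitP r : r \in S -> (P r (exit r) \notin X) && (exit r != ord0).
  rewrite inE => /andP[Pr0 /existsP[c Prc]]; rewrite /exit.
  case: pickP => [c' Prc'|/(_ c)]; last by rewrite Prc.
  by rewrite Prc' /=; apply: contraTneq Pr0 => c'0; rewrite -c'0.
rewrite -{1}(mxrank_upper_ones 'F_2 #|S|).
have -> : (\matrix_(i < #|S|, j < #|S|) ((i <= j)%N%:R : 'F_2) =
    \matrix_(i, j) (adj (P (enum_val i) ord0) (P (enum_val j) (exit (enum_val j))))%:R)%R.
  apply/matrixP => i j; rewrite !mxE adj_line ?leq_enum_val //.
  by case/andP: (exitP _ (enum_valP j)).
apply: cut_rank_ge => i; first by have := enum_valP i; rewrite inE => /andP[].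
by case/andP: (exitP _ (enum_valP i)).
Qed.

Lemma mixed_lines_bound (X : {set V}) : #|mixed_lines P X| <= 2 * cut_rank adj X.
Proof.
rewrite mul2n -addnn -{2}(cut_rank_setC adj_sym X).
apply: leq_trans (leq_add (anchored_lines_bound X) (anchored_lines_bound (~: X))).
apply: leq_trans (leq_card_setU _ _); apply: subset_leq_card; apply/subsetP => r.
rewrite !inE => /andP[/existsP[c Prc] /existsP[c' Prc']].
case: (P r ord0 \in X) => /=; [rewrite orbF|]; apply/existsP.
  by exists c'.
by exists c; rewrite inE negbK.
Qed.
End Lines.

Section Grid.
Variable m : nat.
Local Notation n := m.+1.
Local Notation V := (grid_vertex n).
Definition grid_row (r c : 'I_n) : V := (r, c).
Definition grid_col (c r : 'I_n) : V := (r, c).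
Local Notation rows X := (mixed_lines grid_row X).
Local Notation cols X := (mixed_lines grid_col X).

Lemma comp_grid_sym : symmetric (comp_grid n).
Proof. by move=> a b; rewrite /comp_grid eq_sym orbC. Qed.

Lemma comp_grid_row (r r' c : 'I_n) :
  c != ord0 -> comp_grid n (r, ord0) (r', c) = (r <= r').
Proof.
move=> c0; rewrite /comp_grid xpair_eqE [ord0 == c]eq_sym (negbTE c0) andbF /=.
by rewrite leqn0 -[c == 0 :> nat]/(c == ord0) (negbTE c0) !andbF orbF andbT.
Qed.

Lemma comp_grid_col (r r' c : 'I_n) :
  c != ord0 -> comp_grid n (ord0, r) (c, r') = (r <= r').
Proof.
move=> c0; rewrite /comp_grid xpair_eqE [ord0 == c]eq_sym (negbTE c0) /=.
by rewrite leqn0 -[c == 0 :> nat]/(c == ord0) (negbTE c0) /= orbF.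
Qed.

Lemma setC_sub_mixed (X : {set V}) r0 c0 :
    r0 \notin rows X -> c0 \notin cols X -> (r0, c0) \in X ->
  ~: X \subset setX (rows X) (cols X).
Proof.
move=> r0_pure c0_pure Xr0c0; apply/subsetP => -[r c]; rewrite !inE /= => Xrc.
apply/andP; split; apply/andP; split; apply/existsP.
- by exists c0; apply: notin_mixed_lines c0_pure Xr0c0.
- by exists c.
- by exists r0; apply: notin_mixed_lines r0_pure Xr0c0.
- by exists r.
Qed.

Lemma mixed_rows_or_cols (X : {set V}) :
    n * n <= 4 * #|X| -> n * n <= 4 * #|~: X| ->
  n <= 2 * #|rows X| \/ n <= 2 * #|cols X|.
Proof.
move=> largeX largeCX.
have [|few_rows] := leqP n (2 * #|rows X|); first by left.
have [|few_cols] := leqP n (2 * #|cols X|); first by right.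
have /card_gt0P[r0] : 0 < #|~: rows X| by have := cardsC (rows X); rewrite card_ord; lia.
have /card_gt0P[c0] : 0 < #|~: cols X| by have := cardsC (cols X); rewrite card_ord; lia.
rewrite !in_setC => c0_pure r0_pure; exfalso.
have [Y [rowsY colsY Y_r0c0 largeCY]] : exists Y : {set V},
    [/\ rows Y = rows X, cols Y = cols X, (r0, c0) \in Y & n * n <= 4 * #|~: Y|].
  case: (boolP ((r0, c0) \in X)) => [Xr0c0|CXr0c0]; first by exists X.
  by exists (~: X); split; rewrite ?mixed_lines_setC ?setCK ?inE.
rewrite -rowsY in few_rows r0_pure; rewrite -colsY in few_cols c0_pure.
by have := subset_leq_card (setC_sub_mixed r0_pure c0_pure Y_r0c0); rewrite cardsX; nia.
Qed.

Lemma grid_cut_rank (X : {set V}) :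
  n * n <= 4 * #|X| -> n * n <= 4 * #|~: X| -> n <= 4 * cut_rank (comp_grid n) X.
Proof.
move=> largeX largeCX.
have := mixed_lines_bound comp_grid_sym (P := grid_row) comp_grid_row X.
have := mixed_lines_bound comp_grid_sym (P := grid_col) comp_grid_col X.
by case: (mixed_rows_or_cols largeX largeCX); lia.
Qed.
End Grid.

Lemma cut_rank_le_width (V T : finType) (adj : rel V) (e : rel T) (f : V -> T) u v :
  e u v -> cut_rank adj (edge_part e f u v) <= decomposition_width adj e f.
Proof. by move=> uv; apply: (leq_bigmax_cond (u, v)). Qed.

Theorem mainTheorem9 (n : nat) (n_pos : (0 < n)%N)
    (T : finType) (e : rel T) (f : grid_vertex n -> T) :
  rank_decomposition e f ->
  (n <= 4 * decomposition_width (comp_grid n) e f)%N.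
Proof.
case: n n_pos f => // m _ f decomp.
have [u [v [uv large_part large_rest]]] := balanced_edge decomp (ord0, ord0).
rewrite card_prod card_ord in large_part large_rest.
apply: leq_trans (grid_cut_rank large_part large_rest) _.
by rewrite leq_mul2l cut_rank_le_width.
Qed.
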